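(* For each integer $l\ge1$, the sequence $X(l)=(a_j)_{j\ge1}$ with $a_j=\nu_2(A_{l,l+j-1})$ is $s$-simple with $s=2^{1+\nu_2(l)}$.
   Context: $A_{l,m}=\frac{l!\,m!}{2^{m-l}}\sum_{k=l}^{m}2^{k}\binom{2m-2k}{m-k}\binom{m+k}{k}\binom{k}{l}$ for $0\le l\le m$; $\nu_2$ is the $2$-adic valuation. A sequence $(a_j)_{j\ge1}$ has block structure with block length $s\ge2$ if for every $t\ge0$, $a_{st+1}=a_{st+2}=\cdots=a_{s(t+1)}$; it is called $s$-simple if $s$ is the largest block length for which this holds. *)

From HB Require Import structures.
From mathcomp Require Import all_boot all_order all_algebra.
Set Implicit Arguments. Unset Strict Implicit. Unset Printing Implicit Defensive.
Import Order.TTheory GRing.Theory Num.Theory.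

Definition A (l m : nat) : rat :=
  ((l`! * m`! * \sum_(l <= k < m.+1) 2 ^ k * 'C(2 * m - 2 * k, m - k)
        * 'C(m + k, k) * 'C(k, l))%N)%:R / (2 ^ (m - l))%:R.

(* 2-adic valuation of a rational number (nu2 0 = 0 by convention) *)
Definition nu2 (q : rat) : int :=
  (logn 2 `|numq q|%N)%:Z - (logn 2 `|denq q|%N)%:Z.

Definition block_structure (T : Type) (a : nat -> T) (s : nat) : Prop :=
  (2 <= s)%N /\
  forall t j : nat, (1 <= j <= s)%N -> a (s * t + j)%N = a (s * t + 1)%N.

Definition s_simple (T : Type) (a : nat -> T) (s : nat) : Prop :=
  block_structure a s /\ forall s', block_structure a s' -> (s' <= s)%N.

(* Write numerator l m = l! m! (sum_k summand l m k), so that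
   A l m = numerator l m / 2 ^ (m - l).  A Wilf-Zeilberger certificate turns a
   pointwise identity between summands into, after telescoping in k, the
   three-term recurrence
     (d+1) N(l, l+d+1) + 4 l N(l+1, l+d) = 2 (2l+d+1) (2l+4d+3) N(l, l+d).
   Induction on d then gives N(l, l+d) = 2^(l+d) (d+2l)^_(2l) b with b odd,
   hence nu2 (A l (l+d)) = l + nu2 ((d+1)(d+2)...(d+2l)).  Shifting this
   window of 2l consecutive integers by one changes its valuation by
   nu2 (d+1+2l) - nu2 (d+1), which vanishes iff 2^(nu2 (2l)) does not divide
   d+1.  A sequence whose value changes exactly after the multiples of s is
   s-simple, which concludes. *)

From mathcomp Require Import all_boot all_order all_algebra.
From mathcomp Require Import zify ring.
Import GRing.Theory Num.Theory.

Lemma mul_central_bin j : j.+1 * 'C((2 * j).+2, j.+1) = 2 * (2 * j).+1 * 'C(2 * j, j).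
Proof.
have sym : 'C((2 * j).+1, j.+1) = 'C((2 * j).+1, j).
  by rewrite -bin_sub; [congr 'C(_, _); lia | lia].
have diag2 := mul_bin_diag (2 * j).+2 j.
have diag1 := mul_bin_diag (2 * j).+1 j.
rewrite /= sym in diag2 diag1.
by rewrite -diag2 -mulnA diag1; ring.
Qed.

Lemma bin_double_succ m : 'C((2 * m).+2, m.+1) = 2 * 'C((2 * m).+1, m.+1).
Proof.
have sym : 'C((2 * m).+1, m) = 'C((2 * m).+1, m.+1).
  by rewrite -bin_sub; [congr 'C(_, _); lia | lia].
by rewrite binS sym addnn -mul2n.
Qed.

Definition summand (l m k : nat) : nat :=
  2 ^ k * 'C(2 * m - 2 * k, m - k) * 'C(m + k, k) * 'C(k, l).

Definition certificate (l m k : nat) : nat :=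
  2 * m.+1 * l.+1 * (2 ^ k * 'C(2 * m.+1 - 2 * k, m.+1 - k) * 'C(m + k, k) * 'C(k, l.+1)).

(* For k = l + i and m = k + j, each shifted summand or certificate is a
   polynomial multiple of one common product [base]; comparing these
   multiples yields the pointwise WZ identity. *)
Section PointwiseIdentity.
Variables l i j k m : nat.
Hypotheses (def_k : k = l + i) (def_m : m = k + j).

Let base : nat := 2 ^ k * 'C(2 * j, j) * 'C(m + k, k) * 'C(k, l).

Let twice_gap : 2 * m - 2 * k = 2 * j. Proof. lia. Qed.
Let gap : m - k = j. Proof. lia. Qed.
Let twice_gapS : 2 * m.+1 - 2 * k = (2 * j).+2. Proof. lia. Qed.
Let gapS : m.+1 - k = j.+1. Proof. lia. Qed.

Lemma summand_base : summand l m k = base.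
Proof. by rewrite /summand twice_gap gap. Qed.

Lemma summand_succ_m : j.+1 * m.+1 * summand l m.+1 k = 2 * (2 * j).+1 * (m.+1 + k) * base.
Proof.
rewrite /summand twice_gapS gapS.
have down := mul_bin_down (m.+1 + k) k.
rewrite addSn /= -addSn addnK in down.
transitivity (2 ^ k * 'C(k, l) * (j.+1 * 'C((2 * j).+2, j.+1)) * (m.+1 * 'C(m.+1 + k, k))).
  by ring.
by rewrite mul_central_bin -down /base; ring.
Qed.

Lemma summand_succ_l : l.+1 * summand l.+1 m k = i * base.
Proof.
rewrite /summand twice_gap gap.
transitivity (2 ^ k * 'C(2 * j, j) * 'C(m + k, k) * (l.+1 * 'C(k, l.+1))); first by ring.
by rewrite mul_bin_left (_ : k - l = i) ?/base; [ring | lia].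
Qed.

Lemma certificate_base : j.+1 * certificate l m k = 4 * m.+1 * (2 * j).+1 * i * base.
Proof.
rewrite /certificate twice_gapS gapS.
transitivity (2 * m.+1 * 2 ^ k * 'C(m + k, k) * (j.+1 * 'C((2 * j).+2, j.+1))
              * (l.+1 * 'C(k, l.+1))); first by ring.
by rewrite mul_central_bin mul_bin_left (_ : k - l = i) ?/base; [ring | lia].
Qed.

Lemma certificate_succ_k : certificate l m k.+1 = 4 * m.+1 * (m + k).+1 * base.
Proof.
apply/eqP; rewrite -(eqn_pmul2l (ltn0Sn k)); apply/eqP.
rewrite /certificate (_ : 2 * m.+1 - 2 * k.+1 = 2 * j); last by lia.
rewrite (_ : m.+1 - k.+1 = j); last by lia.
rewrite addnS expnS.
transitivity (4 * m.+1 * 2 ^ k * 'C(2 * j, j) * (k.+1 * 'C((m + k).+1, k.+1))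
              * (l.+1 * 'C(k.+1, l.+1))); first by ring.
by rewrite -!mul_bin_diag /= /base; ring.
Qed.

Lemma summand_identity :
  (i + j).+1 * m.+1 * summand l m.+1 k + 4 * l * l.+1 * summand l.+1 m k
    + certificate l m k.+1
  = 2 * (m + l).+1 * (2 * l + 4 * (i + j) + 3) * summand l m k + certificate l m k.
Proof.
apply/eqP; rewrite -(@eqn_pmul2l (j.+1 * l.+1)) //; apply/eqP.
transitivity ((i + j).+1 * l.+1 * (j.+1 * m.+1 * summand l m.+1 k)
              + 4 * l * l.+1 * j.+1 * (l.+1 * summand l.+1 m k)
              + j.+1 * l.+1 * certificate l m k.+1); first by ring.
transitivity (j.+1 * l.+1 * (2 * (m + l).+1 * (2 * l + 4 * (i + j) + 3)) * summand l m k
              + l.+1 * (j.+1 * certificate l m k)); last by ring.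
rewrite summand_succ_m summand_succ_l certificate_succ_k certificate_base summand_base.
by rewrite def_m def_k; ring.
Qed.

End PointwiseIdentity.

Lemma summand_eq0 l m k : k < l -> summand l m k = 0.
Proof. by move=> lt_kl; rewrite /summand (bin_small lt_kl) muln0. Qed.

Lemma certificate_eq0 l m k : k <= l -> certificate l m k = 0.
Proof. by move=> le_kl; rewrite /certificate (@bin_small k l.+1) ?muln0. Qed.

Lemma summand_recurrence l d k : k <= l + d ->
  d.+1 * (l + d).+1 * summand l (l + d).+1 k + 4 * l * l.+1 * summand l.+1 (l + d) k
    + certificate l (l + d) k.+1
  = 2 * (2 * l + d).+1 * (2 * l + 4 * d + 3) * summand l (l + d) k
    + certificate l (l + d) k.
Proof.
move=> le_km; have [lt_kl | le_lk] := ltnP k l.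
  rewrite (summand_eq0 _ (l + d).+1 _ lt_kl) (summand_eq0 _ (l + d) _ lt_kl).
  rewrite (summand_eq0 l.+1 (l + d) k (ltnW lt_kl)) (certificate_eq0 _ _ _ lt_kl).
  by rewrite (certificate_eq0 _ _ _ (ltnW lt_kl)) !muln0.
have := @summand_identity l (k - l) (l + d - k) k (l + d).
rewrite (_ : k - l + (l + d - k) = d); last by lia.
rewrite (_ : l + d + l = 2 * l + d); last by lia.
by apply; lia.
Qed.

Lemma summand_top l d :
  d.+1 * (l + d).+1 * summand l (l + d).+1 (l + d).+1 = certificate l (l + d) (l + d).+1.
Proof.
set m := l + d.
rewrite /summand /certificate !subnn !bin0 !muln1.
rewrite (_ : m.+1 + m.+1 = (2 * m).+2); last by lia.
rewrite (_ : m + m.+1 = (2 * m).+1); last by lia.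
have absorb : l.+1 * 'C(m.+1, l.+1) = d.+1 * 'C(m.+1, l).
  by rewrite mul_bin_left; congr (_ * _); lia.
rewrite bin_double_succ.
transitivity (2 * m.+1 * 2 ^ m.+1 * 'C((2 * m).+1, m.+1) * (d.+1 * 'C(m.+1, l))).
  by ring.
by rewrite -absorb; ring.
Qed.

(* Summing the pointwise identity over k <= m: the certificates telescope. *)
Lemma sum_recurrence l d :
  d.+1 * (l + d).+1 * \sum_(0 <= k < (l + d).+2) summand l (l + d).+1 k
    + 4 * l * l.+1 * \sum_(0 <= k < (l + d).+1) summand l.+1 (l + d) k
  = 2 * (2 * l + d).+1 * (2 * l + 4 * d + 3)
      * \sum_(0 <= k < (l + d).+1) summand l (l + d) k.
Proof.
set m := l + d.
have telescope : \sum_(0 <= k < m.+1) certificate l m k.+1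
               = \sum_(0 <= k < m.+1) certificate l m k + certificate l m m.+1.
  by rewrite -big_nat_recr //= [RHS]big_nat_recl // certificate_eq0.
have summed :
    d.+1 * m.+1 * \sum_(0 <= k < m.+1) summand l m.+1 k
      + 4 * l * l.+1 * \sum_(0 <= k < m.+1) summand l.+1 m k
      + \sum_(0 <= k < m.+1) certificate l m k.+1
  = 2 * (2 * l + d).+1 * (2 * l + 4 * d + 3) * \sum_(0 <= k < m.+1) summand l m k
      + \sum_(0 <= k < m.+1) certificate l m k.
  rewrite !big_distrr -!big_split.
  by apply: eq_big_nat => k /andP [_ lt_km]; apply: summand_recurrence.
rewrite telescope in summed.
rewrite big_nat_recr //= mulnDr summand_top -/m.
lia.
Qed.

Definition numerator (l m : nat) : nat := l`! * m`! * \sum_(l <= k < m.+1) summand l m k.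

Lemma sum_from0 l m : l <= m.+1 ->
  \sum_(l <= k < m.+1) summand l m k = \sum_(0 <= k < m.+1) summand l m k.
Proof.
move=> le_lm; rewrite [RHS](@big_cat_nat _ _ _ l) //=.
suff -> : \sum_(0 <= k < l) summand l m k = 0 by [].
rewrite big_nat_cond big1 // => k.
by rewrite andbT => /andP [_ lt_kl]; apply: summand_eq0.
Qed.

Lemma numerator_recurrence l d :
  d.+1 * numerator l (l + d).+1 + 4 * l * numerator l.+1 (l + d)
  = 2 * (2 * l + d).+1 * (2 * l + 4 * d + 3) * numerator l (l + d).
Proof.
rewrite /numerator !sum_from0; try lia.
rewrite !factS.
transitivity (l`! * (l + d)`! *
  (d.+1 * (l + d).+1 * \sum_(0 <= k < (l + d).+2) summand l (l + d).+1 k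
   + 4 * l * l.+1 * \sum_(0 <= k < (l + d).+1) summand l.+1 (l + d) k)); first by ring.
by rewrite sum_recurrence; ring.
Qed.

Lemma numerator_diag l : numerator l l = 2 ^ l * (2 * l) ^_ (2 * l).
Proof.
rewrite /numerator big_nat1 /summand !subnn bin0 binn !muln1 ffactnn.
rewrite -(@bin_fact (2 * l) l); last by lia.
rewrite (_ : 2 * l - l = l); last by lia.
by rewrite mul2n -addnn; ring.
Qed.

Lemma numerator_below l : numerator l.+1 l = 0.
Proof. by rewrite /numerator big_geq ?muln0. Qed.

Lemma ffact_shift n k : (n + k).+1 ^_ k * n.+1 = (n + k).+1 * (n + k) ^_ k.
Proof. by rewrite -ffactSS ffactnSr; congr (_ * _); lia. Qed.

Lemma cancel_common a K x y : 0 < K -> a + K * x = K * y -> x <= y /\ a = K * (y - x).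
Proof.
move=> K_gt0 e; split; last by rewrite mulnBr -e addnK.
by rewrite -(leq_pmul2l K_gt0) -e leq_addl.
Qed.

(* Closed form of the numerators up to an odd factor, by strong induction on
   d: the recurrence expresses N(l, l+d+1) through N(l, l+d), whose odd part
   is multiplied by the odd number 2l+4d+3, and N(l+1, l+d), which
   contributes an even correction. *)
Lemma numerator_closed_form d l :
  exists2 b, odd b & numerator l (l + d) = 2 ^ (l + d) * (d + 2 * l) ^_ (2 * l) * b.
Proof.
elim/ltn_ind: d l => -[|d] IH l.
  by exists 1; rewrite ?addn0 ?numerator_diag ?muln1.
have [b1 odd_b1 E1] := IH d (ltnSn d) l.
have [b2 E2] : exists b2, numerator l.+1 (l + d)
    = 2 ^ (l + d) * (d + 2 * l) ^_ (2 * l) * (d + 2 * l).+1 * d * b2.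
  case: d IH {E1} => [|d] IH; first by exists 0; rewrite addn0 numerator_below !muln0.
  have [b2 _ E2] := IH d (ltnW (ltnSn d)) l.+1.
  exists b2; rewrite addnS -addSn E2 (_ : 2 * l.+1 = (2 * l).+2); last by lia.
  rewrite (_ : d + (2 * l).+2 = (d + 2 * l).+2); last by lia.
  by rewrite ffactSS ffactnSr (_ : (d + 2 * l).+1 - 2 * l = d.+1); [ring | lia].
set P := (d + 2 * l) ^_ (2 * l) in E1 E2 *.
set K := 2 ^ (l + d).+1 * (2 * l + d).+1 * P.
have K_gt0 : 0 < K by rewrite !muln_gt0 expn_gt0 ffact_gt0 leq_addl.
have rec := numerator_recurrence l d.
have [le_xy E] : 2 * l * d * b2 <= (2 * l + 4 * d + 3) * b1
    /\ d.+1 * numerator l (l + d).+1 = K * ((2 * l + 4 * d + 3) * b1 - 2 * l * d * b2).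
  by apply: cancel_common => //; rewrite /K E1 E2 in rec *; rewrite expnS; lia.
exists ((2 * l + 4 * d + 3) * b1 - 2 * l * d * b2).
  by rewrite oddB // -!mulnA oddM (oddM 2) odd_b1 oddD (oddD (2 * l)) (oddM 2) (oddM 4).
apply/eqP; rewrite addnS -(eqn_pmul2l (ltn0Sn d)) E addSn; apply/eqP.
transitivity (2 ^ (l + d).+1 * ((2 * l + d).+1 * P)
              * ((2 * l + 4 * d + 3) * b1 - 2 * l * d * b2)); first by rewrite /K; ring.
by rewrite /P (addnC (2 * l)) -ffact_shift; ring.
Qed.

Lemma A_closed_form l d :
  exists2 b, odd b & A l (l + d) = ((2 ^ l * (d + 2 * l) ^_ (2 * l) * b)%:R)%R.
Proof.
have [b odd_b E] := numerator_closed_form d l.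
have split_pow : numerator l (l + d) = 2 ^ d * (2 ^ l * (d + 2 * l) ^_ (2 * l) * b).
  by rewrite E expnD; ring.
exists b => //; rewrite /A -/(numerator l (l + d)) split_pow addKn natrM.
by rewrite mulrAC mulfV ?mul1r // pnatr_eq0 expn_eq0.
Qed.

Lemma nu2_nat (n : nat) : nu2 (n%:R)%R = logn 2 n.
Proof. by rewrite /nu2 pmulrn numq_int denq_int /= logn1 subr0. Qed.

Lemma logn2_pow2M a n : 0 < n -> logn 2 (2 ^ a * n) = a + logn 2 n.
Proof. by move=> n_gt0; rewrite lognM ?expn_gt0 // pfactorK. Qed.

Lemma logn2_double n : 0 < n -> logn 2 (2 * n) = 1 + logn 2 n.
Proof. exact: (logn2_pow2M 1). Qed.

Lemma logn2_odd n : odd n -> logn 2 n = 0.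
Proof. by move=> odd_n; rewrite logn_coprime // coprime2n. Qed.

Lemma odd_part n : 0 < n -> exists2 u, odd u & n = 2 ^ logn 2 n * u.
Proof.
move=> n_gt0; have [u coprime_u def_n] := pfactor_coprime (isT : prime 2) n_gt0.
by exists u; [rewrite -coprime2n | rewrite mulnC].
Qed.

Lemma nu2_A l d : nu2 (A l (l + d)) = (l + logn 2 ((d + 2 * l) ^_ (2 * l)))%N.
Proof.
have [b odd_b ->] := A_closed_form l d.
have P_gt0 : 0 < (d + 2 * l) ^_ (2 * l) by rewrite ffact_gt0 leq_addl.
rewrite nu2_nat -mulnA logn2_pow2M; last by rewrite muln_gt0 P_gt0 odd_gt0.
by rewrite (lognM 2 P_gt0 (odd_gt0 odd_b)) (logn2_odd _ odd_b) addn0.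
Qed.

(* Adding y to x leaves nu2 x unchanged iff 2 ^ nu2 y does not divide x:
   the valuations either differ (the smaller one wins) or agree (and the sum
   of the two odd parts is even). *)
Lemma logn2_add x y : 0 < x -> 0 < y ->
  (logn 2 (x + y) == logn 2 x) = ~~ (2 ^ logn 2 y %| x).
Proof.
move=> x_gt0 y_gt0; rewrite pfactor_dvdn //.
have [u odd_u Ex] := odd_part _ x_gt0; have [w odd_w Ey] := odd_part _ y_gt0.
set a := logn 2 x in Ex *; set b := logn 2 y in Ey *.
have [lt_ab | le_ba] := ltnP a b.
  have split_sum : x + y = 2 ^ a * (u + 2 ^ (b - a) * w).
    by rewrite Ex Ey -(subnKC (ltnW lt_ab)) addKn expnD; ring.
  have odd_sum : odd (u + 2 ^ (b - a) * w).
    by rewrite oddD odd_u oddM oddX subn_eq0 leqNgt lt_ab.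
  by rewrite split_sum logn2_pow2M ?odd_gt0 // logn2_odd // addn0 eqxx.
have split_sum : x + y = 2 ^ b * (2 ^ (a - b) * u + w).
  by rewrite Ex Ey -(subnKC le_ba) addKn expnD; ring.
have inner_gt0 : 0 < 2 ^ (a - b) * u + w by rewrite addn_gt0 (odd_gt0 odd_w) orbT.
rewrite split_sum logn2_pow2M //; apply/negbTE/eqP => same_val.
have {same_val} val_inner : logn 2 (2 ^ (a - b) * u + w) = a - b by lia.
have [eq_ab | ne_ab] := eqVneq (a - b) 0.
  have : 2 ^ 1 %| 2 ^ (a - b) * u + w by rewrite eq_ab mul1n dvdn2 oddD odd_u odd_w.
  by rewrite pfactor_dvdn // val_inner eq_ab.
move: val_inner; rewrite logn2_odd; first by move/esym/eqP; rewrite (negbTE ne_ab).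
by rewrite oddD oddM oddX (negbTE ne_ab) odd_w.
Qed.

Lemma logn2_ffact_shift n k : 0 < k ->
  (logn 2 ((n.+1 + k) ^_ k) == logn 2 ((n + k) ^_ k)) = ~~ (2 ^ logn 2 k %| n.+1).
Proof.
move=> k_gt0.
have P_gt0 m : 0 < (m + k) ^_ k by rewrite ffact_gt0 leq_addl.
have valuations : logn 2 ((n.+1 + k) ^_ k) + logn 2 n.+1
                  = logn 2 (n.+1 + k) + logn 2 ((n + k) ^_ k).
  by rewrite -!lognM // ?addn_gt0 ?k_gt0 ?orbT // addSn ffact_shift.
rewrite -logn2_add ?addn_gt0 ?k_gt0 ?orbT //.
by apply/eqP/eqP; lia.
Qed.

(* A sequence (indexed from 1) whose value changes from position j to j + 1
   exactly when s divides j is s-simple: it is constant on each block, and a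
   longer block would contain the jump after position s. *)
Lemma s_simple_of_jumps (T : eqType) (a : nat -> T) s : 2 <= s ->
  (forall j, 0 < j -> (a j.+1 == a j) = ~~ (s %| j)) -> s_simple a s.
Proof.
move=> s_ge2 jumps.
have s_gt0 : 0 < s by apply: leq_trans s_ge2.
have in_block t i : i < s -> a (s * t + i.+1) = a (s * t + 1).
  elim: i => [// | i IH] lt_is.
  rewrite -IH ?(ltnW lt_is) //; apply/eqP.
  rewrite (addnS (s * t) i.+1) jumps ?addn_gt0 ?orbT //.
  by rewrite dvdn_addr ?dvdn_mulr // gtnNdvd.
split.
  split => // t j /andP [j_gt0 le_js].
  by rewrite -(prednK j_gt0) in_block // prednK.
move=> s' [_ block'].
rewrite leqNgt; apply/negP => lt_ss'.
have first_block j : 0 < j <= s' -> a j = a 1.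
  by move=> j_in; have := block' 0 j j_in; rewrite muln0 !add0n.
have no_jump : a s.+1 = a s by rewrite !first_block // ?s_gt0 ?lt_ss' // ltnW.
by move: (jumps s s_gt0); rewrite no_jump eqxx dvdnn.
Qed.

Lemma nu2_A_jump l j : 0 < l -> 0 < j ->
  (nu2 (A l (l + j.+1 - 1)) == nu2 (A l (l + j - 1))) = ~~ (2 ^ (1 + logn 2 l) %| j).
Proof.
move=> l_gt0 /prednK <-; set n := j.-1.
rewrite (_ : l + n.+2 - 1 = l + n.+1); last by lia.
rewrite (_ : l + n.+1 - 1 = l + n); last by lia.
rewrite !nu2_A eqz_nat eqn_add2l logn2_ffact_shift ?muln_gt0 //.
by rewrite logn2_double.
Qed.

Theorem mainTheorem11 (l : nat) (hl : (1 <= l)%N) :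
  s_simple (fun j : nat => nu2 (A l (l + j - 1))) (2 ^ (1 + logn 2 l)).
Proof.
apply: s_simple_of_jumps => [|j j_gt0]; first by rewrite expnS leq_pmulr ?expn_gt0.
exact: nu2_A_jump.
Qed.
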